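(* Let $H$ be an almost-breakable monoid. If $\mathcal{P}_{\mathrm{fin},1}(H)$ is UmF, then every minimal factorization of every element of $\mathcal{P}_{\mathrm{fin},1}(H)$ is square-free (no irreducible occurs more than once as a letter).
   Context: A monoid $H$ is almost-breakable if for all $x,y\in H$, $xy\in\{x,y\}$ or $yx\in\{x,y\}$. $\mathcal{P}_{\mathrm{fin},1}(H)$ denotes the set of non-empty finite subsets of $H$ containing $1_H$, a monoid under $XY=\{xy:x\in X,y\in Y\}$. In a monoid $M$: $x\mid_M y$ iff $y\in MxM$; $x,y$ are associated if each divides the other; proper divisor means divides but not associated. A unit-divisor divides $1_M$; otherwise it is a non-unit-divisor. An irreducible is a non-unit-divisor $a$ with $a\neq xy$ for all non-unit-divisors $x,y$ properly dividing $a$. A factorization of $x$ is a finite word over the irreducibles with product $x$. For words $\mathfrak a,\mathfrak b$, $\mathfrak a\sqsubseteq\mathfrak b$ means $\mathfrak a$ is, up to associatedness of letters, a subword (subsequence) of some permutation of $\mathfrak b$; equivalence means $\sqsubseteq$ both ways. A factorization $\mathfrak a$ of $x$ is minimal if no factorization $\mathfrak b$ of $x$ satisfies $\mathfrak b\sqsubseteq\mathfrak a\not\sqsubseteq\mathfrak b$. $M$ is UmF if every non-unit-divisor has a factorization and any two minimal factorizations of an element are equivalent. *)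

From Stdlib Require Import List Permutation FunctionalExtensionality PropExtensionality ProofIrrelevance.
Import ListNotations.
Set Implicit Arguments.

Record monoid := Monoid {
  mcar :> Type;
  mop : mcar -> mcar -> mcar;
  mone : mcar;
  mopA : forall x y z, mop x (mop y z) = mop (mop x y) z;
  mop1l : forall x, mop mone x = x;
  mop1r : forall x, mop x mone = x
}.
Arguments mop {m}.

Definition almost_breakable (H : monoid) : Prop :=
  forall x y : H,
    (mop x y = x \/ mop x y = y) \/ (mop y x = x \/ mop y x = y).

Section Factorization.
Variable M : monoid.

Definition mdivides (x y : M) : Prop := exists a b : M, y = mop (mop a x) b.
Definition massoc (x y : M) : Prop := mdivides x y /\ mdivides y x.
Definition proper_divisor (x y : M) : Prop := mdivides x y /\ ~ massoc x y.
Definition unit_divisor (x : M) : Prop := mdivides x (mone M).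

Definition irreducible (a : M) : Prop :=
  ~ unit_divisor a /\
  forall x y : M, ~ unit_divisor x -> ~ unit_divisor y ->
    proper_divisor x a -> proper_divisor y a -> a <> mop x y.

Definition word_prod (w : list M) : M := fold_right (@mop M) (mone M) w.

Definition factorization (w : list M) (x : M) : Prop :=
  Forall irreducible w /\ word_prod w = x.

Inductive subword {A : Type} : list A -> list A -> Prop :=
| subword_nil : subword [] []
| subword_skip : forall x s t, subword s t -> subword s (x :: t)
| subword_keep : forall x s t, subword s t -> subword (x :: s) (x :: t).

Definition wle (a b : list M) : Prop :=
  exists b', Permutation b b' /\
  exists s, subword s b' /\ Forall2 massoc a s.

Definition wequiv (a b : list M) : Prop := wle a b /\ wle b a.

Definition minimal_factorization (a : list M) (x : M) : Prop :=
  factorization a x /\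
  ~ (exists b, factorization b x /\ wle b a /\ ~ wle a b).

Definition UmF : Prop :=
  (forall x : M, ~ unit_divisor x -> exists a, factorization a x) /\
  (forall (x : M) (a b : list M),
     minimal_factorization a x -> minimal_factorization b x -> wequiv a b).

End Factorization.

Section Pfin1.
Variable H : monoid.

Definition finite_set (X : H -> Prop) : Prop :=
  exists l : list H, forall x, X x <-> In x l.

Definition is_fin1 (X : H -> Prop) : Prop := finite_set X /\ X (mone H).

Definition Pfin1_car := { X : H -> Prop | is_fin1 X }.

Definition setmul (X Y : H -> Prop) : H -> Prop :=
  fun z => exists x y, X x /\ Y y /\ z = mop x y.

Lemma setmul_fin1 X Y : is_fin1 X -> is_fin1 Y -> is_fin1 (setmul X Y).
Proof.
  intros [[lx HX] X1] [[ly HY] Y1]; split.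
  - exists (map (fun p => mop (fst p) (snd p)) (list_prod lx ly)).
    intro z; split.
    + intros (x & y & Hx & Hy & ->).
      apply (in_map (fun p => mop (fst p) (snd p)) _ (x, y)).
      apply in_prod; [apply HX | apply HY]; assumption.
    + intro Hz; apply in_map_iff in Hz as [[x y] [<- Hp]].
      apply in_prod_iff in Hp as [Hx Hy].
      exists x, y; split; [apply HX; auto | split; [apply HY; auto | reflexivity]].
  - exists (mone H), (mone H); split; [auto | split; [auto | now rewrite mop1l]].
Qed.

Definition Pfin1_op (X Y : Pfin1_car) : Pfin1_car :=
  exist _ (setmul (proj1_sig X) (proj1_sig Y))
    (setmul_fin1 (proj2_sig X) (proj2_sig Y)).

Definition single1 : H -> Prop := fun z => z = mone H.

Lemma single1_fin1 : is_fin1 single1.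
Proof.
  split.
  - exists [mone H]; intro z; unfold single1; simpl; intuition.
  - reflexivity.
Qed.

Definition Pfin1_one : Pfin1_car := exist _ single1 single1_fin1.

Lemma Pfin1_eq (X Y : Pfin1_car) :
  (forall z, proj1_sig X z <-> proj1_sig Y z) -> X = Y.
Proof.
  destruct X as [X HX], Y as [Y HY]; simpl; intro E.
  assert (X = Y) as <-.
  { apply functional_extensionality; intro z; apply propositional_extensionality; apply E. }
  f_equal; apply proof_irrelevance.
Qed.

Lemma Pfin1_opA X Y Z : Pfin1_op X (Pfin1_op Y Z) = Pfin1_op (Pfin1_op X Y) Z.
Proof.
  apply Pfin1_eq; intro z; simpl; unfold setmul; split.
  - intros (x & w & Hx & (y & u & Hy & Hu & ->) & ->).
    exists (mop x y), u; split; [exists x, y; auto | split; auto]. apply mopA.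
  - intros (w & u & (x & y & Hx & Hy & ->) & Hu & ->).
    exists x, (mop y u); split; [auto | split; [exists y, u; auto | symmetry; apply mopA]].
Qed.

Lemma Pfin1_op1l X : Pfin1_op Pfin1_one X = X.
Proof.
  apply Pfin1_eq; intro z; simpl; unfold setmul, single1; split.
  - intros (x & y & -> & Hy & ->); now rewrite mop1l.
  - intro Hz; exists (mone H), z; repeat split; auto; now rewrite mop1l.
Qed.

Lemma Pfin1_op1r X : Pfin1_op X Pfin1_one = X.
Proof.
  apply Pfin1_eq; intro z; simpl; unfold setmul, single1; split.
  - intros (x & y & Hx & -> & ->); now rewrite mop1r.
  - intro Hz; exists z, (mone H); repeat split; auto; now rewrite mop1r.
Qed.

Definition Pfin1 : monoid :=
  @Monoid Pfin1_car Pfin1_op Pfin1_one Pfin1_opA Pfin1_op1l Pfin1_op1r.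

End Pfin1.

(* In an almost-breakable monoid H the relation "x s = x or s x = x" is a total
   preorder.  If x is a minimal element of X \ {1}, then x absorbs every s in X from
   one and the same side, so X = {1,x}(X \ {x}) or X = (X \ {x}){1,x}; iterating, X
   is a product of pairwise distinct irreducibles {1,x}.  In P_fin,1(H) divisibility
   implies inclusion, so associated letters are equal and a ⊑ b means that a is a
   sub-multiset of b.  This square-free factorization contains a minimal one, and by
   UmF every minimal factorization is a sub-multiset of that, hence square-free. *)

From Stdlib Require Import List Permutation Classical Wf_nat Lia.
Import ListNotations.

Arguments mdivides {M}.
Arguments massoc {M}.
Arguments unit_divisor {M}.
Arguments irreducible {M}.
Arguments word_prod {M}.
Arguments factorization {M}.
Arguments wle {M}.
Arguments minimal_factorization {M}.

Local Notation "x ** y" := (mop x y) (at level 40, left associativity).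

Lemma list_min_exists {A : Type} (R : A -> A -> Prop) (P : A -> Prop) (l : list A) :
  (forall x y, R x y \/ R y x) ->
  (forall x y z, R x y -> R y z -> R x z) ->
  (exists x, In x l /\ P x) ->
  exists m, In m l /\ P m /\ forall s, In s l -> P s -> R m s.
Proof.
  intros Rtot Rtrans.
  induction l as [|a l IH]; intros [y [Hy Py]]; [destruct Hy|].
  destruct (classic (exists x, In x l /\ P x)) as [Ex|Nx].
  - destruct (IH Ex) as [m [Hm [Pm Mm]]].
    destruct (classic (P a /\ R a m)) as [[Pa Ram]|Na].
    + exists a; split; [left; reflexivity|split; [exact Pa|]].
      intros s [<-|Hs] Ps; [|exact (Rtrans _ _ _ Ram (Mm s Hs Ps))].
      destruct (Rtot a a); assumption.
    + exists m; split; [right; exact Hm|split; [exact Pm|]].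
      intros s [<-|Hs] Ps; [|exact (Mm s Hs Ps)].
      destruct (Rtot a m); tauto.
  - destruct Hy as [<-|Hy]; [|exfalso; eauto].
    exists a; split; [left; reflexivity|split; [exact Py|]].
    intros s [<-|Hs] Ps; [destruct (Rtot a a); assumption|exfalso; eauto].
Qed.

Section AlmostBreakable.
Context {H : monoid}.
Hypothesis AB : almost_breakable H.

Lemma mop_idem (x : H) : x ** x = x.
Proof. destruct (AB x x) as [[E|E]|[E|E]]; exact E. Qed.

Definition absorbs (x s : H) : Prop := x ** s = x \/ s ** x = x.

Lemma absorbs_total (x s : H) : absorbs x s \/ absorbs s x.
Proof. unfold absorbs; destruct (AB x s) as [[E|E]|[E|E]]; tauto. Qed.

Lemma absorbs_trans (t x s : H) : absorbs t x -> absorbs x s -> absorbs t s.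
Proof.
  unfold absorbs; intros [Etx|Ext] [Exs|Esx].
  - left; rewrite <- Etx, <- mopA, Exs; reflexivity.
  - destruct (AB t s) as [[E|E]|[E|E]]; try tauto.
    + assert (t = x) as ->; [|tauto].
      transitivity (t ** (s ** x)); [rewrite Esx; symmetry; exact Etx|].
      rewrite mopA, E; exact Esx.
    + assert (s = x) as ->; [|tauto].
      transitivity (s ** (t ** x)); [rewrite Etx; symmetry; exact E|].
      rewrite mopA, E; exact Esx.
  - destruct (AB t s) as [[E|E]|[E|E]]; try tauto.
    + assert (s = x) as ->; [|tauto].
      transitivity ((x ** t) ** s); [rewrite Ext; symmetry; exact E|].
      rewrite <- mopA, E; exact Exs.
    + assert (t = x) as ->; [|tauto].
      transitivity ((x ** s) ** t); [rewrite Exs; symmetry; exact Ext|].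
      rewrite <- mopA, E; exact Exs.
  - right; rewrite <- Ext, mopA, Esx; reflexivity.
Qed.

(* [u] is L-related and [v] is R-related to [x] (Green's relations). *)
Lemma no_distinct_L_and_R_partners (x u v : H) :
  u ** x = x -> x ** u = u -> x ** v = x -> v ** x = v -> u = x \/ v = x.
Proof.
  intros Hux Hxu Hxv Hvx.
  destruct (AB u v) as [[E|E]|[E|E]].
  - left; transitivity (u ** (v ** x)); [rewrite Hvx; symmetry; exact E|].
    rewrite mopA, E; exact Hux.
  - right; symmetry; transitivity (x ** (u ** v)); [rewrite E; symmetry; exact Hxv|].
    rewrite mopA, Hxu; exact E.
  - right; transitivity (v ** (u ** x)); [rewrite Hux; symmetry; exact Hvx|].
    rewrite mopA, E; exact Hux.
  - left; symmetry; transitivity (x ** (v ** u)); [rewrite E; symmetry; exact Hxv|].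
    rewrite mopA, Hxv; exact Hxu.
Qed.

Lemma absorbs_one_side (S : H -> Prop) (x : H) :
  (forall s, S s -> absorbs x s) ->
  (forall s, S s -> x ** s = x \/ x ** s = s) \/
  (forall s, S s -> s ** x = x \/ s ** x = s).
Proof.
  intro Hx; apply NNPP; intro N; apply not_or_and in N as [L R].
  apply not_all_ex_not in L as [s1 L]; apply imply_to_and in L as [S1 L].
  apply not_all_ex_not in R as [s2 R]; apply imply_to_and in R as [S2 R].
  assert (E1 : s1 ** x = x) by (destruct (Hx s1 S1); tauto).
  assert (E2 : x ** s2 = x) by (destruct (Hx s2 S2); tauto).
  destruct (no_distinct_L_and_R_partners x (x ** s1) (s2 ** x)) as [F|F].
  - rewrite <- mopA, E1; apply mop_idem.
  - rewrite mopA, mop_idem; reflexivity.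
  - rewrite mopA, E2; apply mop_idem.
  - rewrite <- mopA, mop_idem; reflexivity.
  - tauto.
  - tauto.
Qed.

End AlmostBreakable.

Lemma word_prod_app {M : monoid} (a b : list M) :
  word_prod (a ++ b) = word_prod a ** word_prod b.
Proof.
  induction a as [|x a IH]; simpl; [rewrite mop1l; reflexivity|].
  rewrite IH, mopA; reflexivity.
Qed.

Lemma mdivides_refl {M : monoid} (x : M) : mdivides x x.
Proof. exists (mone M), (mone M); rewrite mop1r, mop1l; reflexivity. Qed.

Lemma In_mdivides_word_prod {M : monoid} (x : M) (w : list M) :
  In x w -> mdivides x (word_prod w).
Proof.
  intro Hx; destruct (in_split _ _ Hx) as [w1 [w2 ->]].
  exists (word_prod w1), (word_prod w2); rewrite word_prod_app; simpl.
  rewrite mopA; reflexivity.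
Qed.

Lemma subword_app {A : Type} (a r : list A) : subword a (a ++ r).
Proof.
  induction a as [|x a IH]; simpl; [induction r; constructor; auto|].
  constructor; exact IH.
Qed.

Lemma subword_perm {A : Type} (s t : list A) :
  subword s t -> exists r, Permutation t (s ++ r).
Proof.
  induction 1 as [|x s t _ [r IH]|x s t _ [r IH]].
  - exists []; reflexivity.
  - exists (x :: r); rewrite <- Permutation_middle; apply perm_skip; exact IH.
  - exists r; apply perm_skip; exact IH.
Qed.

Lemma finite_set_incl {H : monoid} (X Y : H -> Prop) :
  finite_set H X -> (forall z, Y z -> X z) -> finite_set H Y.
Proof.
  intros [l Hl] YX.
  assert (Yl : forall z, Y z -> In z l) by (intros z Hz; apply Hl, YX, Hz).
  clear X Hl YX; revert Y Yl; induction l as [|a l IH]; intros Y Yl.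
  - exists []; intro z; split; [apply Yl|intros []].
  - destruct (IH (fun z => Y z /\ z <> a)) as [l' Hl'].
    { intros z [Yz Nz]; destruct (Yl z Yz); [congruence|assumption]. }
    destruct (classic (Y a)) as [Ya|Na]; [exists (a :: l')|exists l'];
      intro z; simpl; rewrite <- Hl'; destruct (classic (a = z)) as [<-|Nz];
      try assert (z <> a) by congruence; tauto.
Qed.

Section Pfin1Factorization.
Context {H : monoid}.

Local Notation elem X z := (proj1_sig X z).

Lemma elem_one (X : Pfin1 H) : elem X (mone H).
Proof. exact (proj2 (proj2_sig X)). Qed.

Lemma mdivides_Pfin1_incl (X Y : Pfin1 H) :
  mdivides X Y -> forall z, elem X z -> elem Y z.
Proof.
  intros [A [B ->]] z Hz.
  exists (mone H ** z), (mone H); split; [exists (mone H), z|split].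
  - split; [apply elem_one|split; [exact Hz|reflexivity]].
  - apply elem_one.
  - rewrite mop1r, mop1l; reflexivity.
Qed.

Lemma massoc_Pfin1_eq (X Y : Pfin1 H) : massoc X Y -> X = Y.
Proof.
  intros [XY YX]; apply Pfin1_eq; intro z; split; apply mdivides_Pfin1_incl; assumption.
Qed.

Lemma wle_Pfin1_iff (a b : list (Pfin1 H)) :
  wle a b <-> exists r, Permutation b (a ++ r).
Proof.
  split.
  - intros [b' [Pb [s [Sw A]]]].
    assert (a = s) as <- by (clear Sw; induction A; f_equal; auto using massoc_Pfin1_eq).
    destruct (subword_perm _ _ Sw) as [r Pr].
    exists r; transitivity b'; assumption.
  - intros [r Pr]; exists (a ++ r); split; [exact Pr|].
    exists a; split; [apply subword_app|].
    clear Pr; induction a; constructor; auto; split; apply mdivides_refl.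
Qed.

Lemma minimal_factorization_below (X : Pfin1 H) (c : list (Pfin1 H)) :
  factorization c X ->
  exists d r, minimal_factorization d X /\ Permutation c (d ++ r).
Proof.
  revert c; refine (induction_ltof1 _ (@length _) _ _); intros c IH Fc.
  destruct (classic (minimal_factorization c X)) as [Mc|Nc].
  - exists c, []; rewrite app_nil_r; split; [exact Mc|reflexivity].
  - apply not_and_or in Nc as [|Nc]; [contradiction|].
    apply NNPP in Nc as [b [Fb [Wbc Ncb]]].
    apply wle_Pfin1_iff in Wbc as [[|x r] Pr].
    + exfalso; apply Ncb, wle_Pfin1_iff; exists []; rewrite app_nil_r in *.
      symmetry; exact Pr.
    + destruct (IH b) as [d [r' [Md Pd]]]; [|exact Fb|].
      { unfold ltof; rewrite (Permutation_length Pr), length_app; simpl; lia. }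
      exists d, (r' ++ x :: r); split; [exact Md|].
      rewrite Pr, app_assoc; apply Permutation_app_tail; exact Pd.
Qed.

Lemma Pfin1_eq_one (X : Pfin1 H) :
  (forall z, elem X z -> z = mone H) -> X = mone (Pfin1 H).
Proof.
  intro X1; apply Pfin1_eq; intro z; split; [apply X1|].
  intros ->; apply elem_one.
Qed.

Lemma non_unit_divisor_has_elem (Y : Pfin1 H) :
  ~ unit_divisor Y -> exists y, elem Y y /\ y <> mone H.
Proof.
  intro U; apply NNPP; intro N; apply U.
  rewrite (Pfin1_eq_one Y) at 1; [apply mdivides_refl|].
  intros z Hz; apply NNPP; intro Nz; apply N; exists z; split; assumption.
Qed.

Lemma pair1_fin1 (x : H) : is_fin1 H (fun z => z = mone H \/ z = x).
Proof.
  split; [|left; reflexivity].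
  exists [mone H; x]; intro z; simpl; intuition.
Qed.

Definition pair1 (x : H) : Pfin1 H := exist _ _ (pair1_fin1 x).

Lemma pair1_irreducible (x : H) : x <> mone H -> irreducible (pair1 x).
Proof.
  intro x1; split.
  - intro U; apply x1.
    exact (mdivides_Pfin1_incl _ _ U x (or_intror eq_refl)).
  - intros Y Z UY _ [DY NY] _ _; apply NY.
    destruct (non_unit_divisor_has_elem Y UY) as [y [Yy y1]].
    replace Y with (pair1 x); [split; apply mdivides_refl|].
    apply Pfin1_eq; intro z; split; [|apply mdivides_Pfin1_incl; exact DY].
    intros [->| ->]; [apply elem_one|].
    destruct (mdivides_Pfin1_incl _ _ DY y Yy) as [|<-]; [contradiction|exact Yy].
Qed.

Lemma pair1_notin_word (x : H) (c : list (Pfin1 H)) :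
  x <> mone H -> ~ elem (word_prod c) x -> ~ In (pair1 x) c.
Proof.
  intros x1 Nx Ic; apply Nx.
  exact (mdivides_Pfin1_incl _ _ (In_mdivides_word_prod _ _ Ic) x (or_intror eq_refl)).
Qed.

Lemma Pfin1_remove_fin1 (X : Pfin1 H) (x : H) :
  is_fin1 H (fun z => elem X z /\ (z = mone H \/ z <> x)).
Proof.
  split; [|split; [apply elem_one|left; reflexivity]].
  apply (finite_set_incl (proj1_sig X)); [exact (proj1 (proj2_sig X))|tauto].
Qed.

Definition Pfin1_remove (X : Pfin1 H) (x : H) : Pfin1 H :=
  exist _ _ (Pfin1_remove_fin1 X x).

Lemma pair1_mul_remove (X : Pfin1 H) (x : H) :
  elem X x -> x <> mone H -> (forall s, elem X s -> x ** s = x \/ x ** s = s) ->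
  pair1 x ** Pfin1_remove X x = X.
Proof.
  intros Xx x1 Side; apply Pfin1_eq; intro z; split.
  - intros [p [q [[-> | ->] [[Xq _] ->]]]]; [rewrite mop1l; exact Xq|].
    destruct (Side q Xq) as [-> | ->]; assumption.
  - intro Xz; destruct (classic (z = x)) as [->|Nz].
    + exists x, (mone H); rewrite mop1r; split; [right; reflexivity|].
      split; [split; [apply elem_one|left; reflexivity]|reflexivity].
    + exists (mone H), z; rewrite mop1l; split; [left; reflexivity|].
      split; [split; [exact Xz|right; exact Nz]|reflexivity].
Qed.

Lemma remove_mul_pair1 (X : Pfin1 H) (x : H) :
  elem X x -> x <> mone H -> (forall s, elem X s -> s ** x = x \/ s ** x = s) ->
  Pfin1_remove X x ** pair1 x = X.
Proof.
  intros Xx x1 Side; apply Pfin1_eq; intro z; split.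
  - intros [q [p [[Xq _] [[-> | ->] ->]]]]; [rewrite mop1r; exact Xq|].
    destruct (Side q Xq) as [-> | ->]; assumption.
  - intro Xz; destruct (classic (z = x)) as [->|Nz].
    + exists (mone H), x; rewrite mop1l; split; [split; [apply elem_one|left; reflexivity]|].
      split; [right|]; reflexivity.
    + exists z, (mone H); rewrite mop1r; split; [split; [exact Xz|right; exact Nz]|].
      split; [left|]; reflexivity.
Qed.

Hypothesis AB : almost_breakable H.

Lemma exists_absorbing_elem (X : Pfin1 H) (l : list H) :
  (forall z, elem X z -> z = mone H \/ In z l) ->
  (exists y, elem X y /\ y <> mone H) ->
  exists x, elem X x /\ x <> mone H /\ forall s, elem X s -> absorbs x s.
Proof.
  intros Cov [y [Xy y1]].
  destruct (list_min_exists absorbs (fun z => elem X z /\ z <> mone H) l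
              (absorbs_total AB) (absorbs_trans AB)) as [x [_ [[Xx x1] Min]]].
  { exists y; destruct (Cov y Xy); tauto. }
  exists x; split; [exact Xx|split; [exact x1|]].
  intros s Xs; destruct (classic (s = mone H)) as [->|s1].
  - left; apply mop1r.
  - destruct (Cov s Xs); [contradiction|]; apply Min; tauto.
Qed.

Lemma square_free_factorization_exists (l : list H) (X : Pfin1 H) :
  (forall z, elem X z -> z = mone H \/ In z l) ->
  exists c, factorization c X /\ NoDup c.
Proof.
  revert X; induction l as [l IH] using (induction_ltof1 _ (@length H)); intros X Cov.
  destruct (classic (exists y, elem X y /\ y <> mone H)) as [Ey|Ny].
  2:{ exists []; split; [split; [constructor|]|constructor].
      symmetry; apply Pfin1_eq_one; intros z Xz; apply NNPP; intro z1; eauto. }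
  destruct (exists_absorbing_elem X l Cov Ey) as [x [Xx [x1 Abs]]].
  destruct (in_split x l) as [l1 [l2 ->]]; [destruct (Cov x Xx); tauto|].
  destruct (IH (l1 ++ l2)) with (X := Pfin1_remove X x) as [c [[Fc Pc] Nc]].
  { unfold ltof; rewrite !length_app; simpl; lia. }
  { intros z [Xz Hz]; destruct (Cov z Xz) as [z1|Iz]; [left; exact z1|right].
    apply in_app_iff in Iz as [Iz|[<-|Iz]]; apply in_app_iff;
      [left; exact Iz| |right; exact Iz].
    exfalso; destruct Hz as [E|E]; [exact (x1 E)|exact (E eq_refl)]. }
  assert (Nin : ~ In (pair1 x) c).
  { apply pair1_notin_word; [exact x1|]; rewrite Pc; simpl; tauto. }
  assert (Irr := pair1_irreducible x x1).
  destruct (absorbs_one_side AB (fun s => elem X s) x Abs) as [Side|Side].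
  - exists (pair1 x :: c); split; [split|constructor; assumption].
    + constructor; assumption.
    + change (pair1 x ** word_prod c = X); rewrite Pc; apply pair1_mul_remove; assumption.
  - exists (c ++ [pair1 x]); split; [split|].
    + apply Forall_app; split; [|constructor]; auto.
    + rewrite word_prod_app, Pc; change (word_prod [pair1 x]) with (pair1 x ** mone (Pfin1 H)).
      rewrite mop1r.
      apply remove_mul_pair1; assumption.
    + rewrite <- Permutation_cons_append; constructor; assumption.
Qed.

End Pfin1Factorization.

Theorem corollary4p3 (H : monoid) :
  almost_breakable H ->
  UmF (Pfin1 H) ->
  forall (X : Pfin1 H) (a : list (Pfin1 H)),
    @minimal_factorization (Pfin1 H) a X -> NoDup a.
Proof.
  intros AB [_ Umf] X a Ma.
  destruct (proj2_sig X) as [[l Hl] _].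
  destruct (square_free_factorization_exists AB l X) as [c [Fc Nc]].
  { intros z Xz; right; apply Hl, Xz. }
  destruct (minimal_factorization_below X c Fc) as [d [r [Md Pc]]].
  destruct (Umf X a d Ma Md) as [Wad _].
  apply wle_Pfin1_iff in Wad as [r' Pd].
  apply (NoDup_app_remove_r _ (r' ++ r)), (Permutation_NoDup (l := c)); [|exact Nc].
  rewrite Pc, app_assoc; apply Permutation_app_tail; exact Pd.
Qed.
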